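(* Let $k\ge1$ be an integer. Every uniformizable $k$-primal topological space is a functional Alexandroff space.
   Context: For a topological space $X$ and $a\in X$, $V(a):=\bigcap\{U: U\text{ open}, a\in U\}$. For $f:X\to X$ and $a\in X$, $V_f(a):=\bigcup_{n\ge0}f^{-n}(a)=\{x:\exists n\ge0,\ f^n(x)=a\}$. A topological space $X$ is $k$-primal if there exist maps $f_1,\dots,f_k:X\to X$ such that for each $a\in X$ the set $V_{f_1}(a)\cap\cdots\cap V_{f_k}(a)$ is open and is the smallest open neighbourhood of $a$ (i.e. equals $V(a)$ and is open). $X$ is a functional Alexandroff space if there is $f:X\to X$ such that the topology with basis $\{V_f(a):a\in X\}$ equals the topology of $X$ (equivalently, $X$ is $1$-primal). $X$ is uniformizable if its topology is induced by some uniform structure on $X$. *)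

From HB Require Import structures.
From mathcomp Require Import all_boot all_order.
From mathcomp Require Import boolp classical_sets topology.
Set Implicit Arguments. Unset Strict Implicit. Unset Printing Implicit Defensive.
Local Open Scope classical_set_scope.

Definition Vmin {T : topologicalType} (a : T) : set T :=
  \bigcap_(U in [set U : set T | open U /\ U a]) U.

Definition Vf {T : Type} (f : T -> T) (a : T) : set T :=
  [set x | exists n : nat, iter n f x = a].

Definition k_primal (T : topologicalType) (k : nat) : Prop :=
  exists fs : 'I_k -> (T -> T), forall a : T,
    open (\bigcap_(i in [set: 'I_k]) Vf (fs i) a) /\
    \bigcap_(i in [set: 'I_k]) Vf (fs i) a = Vmin a.

(* X is a functional Alexandroff space: the topology with basis
   {V_f(a) : a in X} (open sets = unions of basis elements) equals that of X *)
Definition functional_alexandroff (T : topologicalType) : Prop :=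
  exists f : T -> T, forall U : set T,
    open U <-> (forall x, U x -> exists a, Vf f a x /\ Vf f a `<=` U).

Definition uniform_structure {T : Type} (ent : set (set (T * T))) : Prop :=
  ent setT /\
  (forall E F, ent E -> E `<=` F -> ent F) /\
  (forall E F, ent E -> ent F -> ent (E `&` F)) /\
  (forall E, ent E -> forall x, E (x, x)) /\
  (forall E, ent E -> ent [set p | E (p.2, p.1)]) /\
  (forall E, ent E -> exists F, ent F /\
      (forall x y z, F (x, y) -> F (y, z) -> E (x, z))).

Definition uniformizable (T : topologicalType) : Prop :=
  exists ent : set (set (T * T)), uniform_structure ent /\
    forall U : set T,
      open U <-> (forall x, U x -> exists2 E, ent E & [set y | E (x, y)] `<=` U).

From mathcomp Require Import all_boot all_order.
From mathcomp Require Import boolp classical_sets topology.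

(* In a uniformizable space the specialization preorder [Vmin a x] is
   symmetric, hence an equivalence relation whose classes are the minimal
   open sets [Vmin a]. A single map [f] of the k-primal family already sends
   every point of [Vmin a] to [a] after finitely many steps, so the first
   return map of [f] to the class of its argument permutes each class
   cyclically: its backward orbit of [a] is exactly [Vmin a]. Since these
   sets are open, they form a basis, and the topology is functional
   Alexandroff. *)

Set Implicit Arguments.
Unset Strict Implicit.
Unset Printing Implicit Defensive.
Local Open Scope classical_set_scope.

Section Specialization.
Variable T : topologicalType.

Lemma VminP (a x : T) : Vmin a x <-> (forall U, open U -> U a -> U x).
Proof.
by split => [Vax U oU Ua|Vax U [oU Ua]]; [apply: Vax | apply: Vax].
Qed.

Lemma Vmin_refl (a : T) : Vmin a a.
Proof. by apply/VminP. Qed.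

Lemma Vmin_trans (a b c : T) : Vmin a b -> Vmin b c -> Vmin a c.
Proof.
move=> /VminP Vab /VminP Vbc; apply/VminP => U oU Ua.
exact/(Vbc _ oU)/(Vab _ oU).
Qed.

Lemma Vmin_sub (a : T) (U : set T) : open U -> U a -> Vmin a `<=` U.
Proof. by move=> oU Ua x /VminP Vax; apply: Vax. Qed.

Lemma open_VminP (U : set T) : (forall a : T, open (Vmin a)) ->
  open U <-> (forall x, U x -> Vmin x `<=` U).
Proof.
move=> oVmin; split => [oU x Ux|VminU]; first exact: Vmin_sub.
have -> : U = \bigcup_(x in U) Vmin x.
  apply/seteqP; split => [x Ux|x [y Uy Vyx]]; last exact: VminU Vyx.
  by exists x => //; apply: Vmin_refl.
by apply: bigcup_open => x _.
Qed.

Lemma functional_alexandroff_Vmin (g : T -> T) :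
  (forall a : T, open (Vmin a)) -> (forall a : T, Vf g a = Vmin a) ->
  functional_alexandroff T.
Proof.
move=> oVmin VfE; exists g => U; rewrite (open_VminP _ oVmin).
split => [VminU x Ux|VfU x Ux].
  by exists x; rewrite VfE; split; [apply: Vmin_refl | apply: VminU].
have [a []] := VfU x Ux; rewrite VfE => Vax VminU y Vxy.
by apply: VminU; apply: Vmin_trans Vax Vxy.
Qed.

End Specialization.

Section UniformSpecialization.
Variables (T : topologicalType) (ent : set (set (T * T))).
Hypothesis ent_uniform : uniform_structure ent.
Hypothesis open_ent : forall U : set T,
  open U <-> (forall x, U x -> exists2 E, ent E & [set y | E (x, y)] `<=` U).

Lemma open_uniform_interior (A : set T) :
  open [set x | exists2 E, ent E & [set y | E (x, y)] `<=` A].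
Proof.
have [_ [_ [_ [_ [_ ent_split]]]]] := ent_uniform.
apply/open_ent => x [E entE EA]; have [F [entF FFE]] := ent_split _ entE.
exists F => // y Fxy; exists F => // z Fyz.
by apply: EA; apply: FFE Fxy Fyz.
Qed.

Lemma Vmin_entourage (x y : T) (E : set (T * T)) :
  Vmin x y -> ent E -> E (x, y).
Proof.
have [_ [_ [_ [ent_refl _]]]] := ent_uniform.
move=> /VminP Vxy entE.
have [F entF FE] : exists2 F, ent F & [set z | F (y, z)] `<=` [set z | E (x, z)].
  by apply: (Vxy _ (open_uniform_interior [set z | E (x, z)])); exists E.
by apply: FE; apply: ent_refl.
Qed.

Lemma Vmin_sym (x y : T) : Vmin x y -> Vmin y x.
Proof.
have [_ [_ [_ [_ [ent_transpose _]]]]] := ent_uniform.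
move=> Vxy; apply/VminP => U oU Uy.
have [E entE EU] := (open_ent U).1 oU y Uy.
by apply: EU; apply: Vmin_entourage Vxy (ent_transpose _ entE).
Qed.

End UniformSpecialization.

Section FirstReturn.
Variables (T : Type) (R : T -> T -> Prop) (f : T -> T).

Definition returns_at (x : T) : pred nat :=
  fun m => (0 < m)%N && `[< R x (iter m f x) >].

(* When [x] never returns to its [R]-class, [first_return x] defaults to [x]. *)
Definition first_return (x : T) : T :=
  match pselect (exists m, returns_at x m) with
  | left returns => iter (ex_minn returns) f x
  | right _ => x
  end.

Hypothesis R_refl : forall x, R x x.

Lemma first_return_rel (x : T) : R x (first_return x).
Proof.
rewrite /first_return; case: pselect => [returns|_] //.
by case: ex_minnP => m /andP[_ /asboolP].
Qed.

Lemma first_return_le (x : T) (j : nat) : returns_at x j ->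
  exists2 m, (0 < m <= j)%N & first_return x = iter m f x.
Proof.
move=> ret_j; rewrite /first_return.
case: pselect => [returns|[]]; last by exists j.
case: ex_minnP => m /andP[m_gt0 _] m_min.
by exists m => //; rewrite m_gt0 m_min.
Qed.

Hypothesis R_sym : forall x y, R x y -> R y x.
Hypothesis R_trans : forall x y z, R x y -> R y z -> R x z.

Lemma iter_first_return_rel (n : nat) (x : T) : R x (iter n first_return x).
Proof.
elim: n => [|n IHn] /=; first exact: R_refl.
exact: R_trans IHn (first_return_rel _).
Qed.

Lemma first_return_reaches (j : nat) (x a : T) :
  R x a -> iter j f x = a -> exists n, iter n first_return x = a.
Proof.
elim/ltn_ind: j x a => -[_ x a _ <-|j IHj x a Rxa fjxa]; first by exists 0%N.
have [m /andP[m_gt0 m_le] retE] : exists2 m, (0 < m <= j.+1)%N & first_return x = iter m f x.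
  by apply: first_return_le; rewrite /returns_at fjxa; apply/andP; split => //; apply/asboolP.
have [n retna] : exists n, iter n first_return (first_return x) = a.
  apply: (IHj (j.+1 - m)%N).
  - by rewrite ltn_subrL m_gt0.
  - exact: R_trans (R_sym (first_return_rel x)) Rxa.
  - by rewrite retE -iterD subnK.
by exists n.+1; rewrite iterSr.
Qed.

Lemma Vf_first_return (a : T) :
  R a `<=` Vf f a -> Vf first_return a = R a.
Proof.
move=> RVf; apply/seteqP; split => [x [n <-]|x Rax].
  exact/R_sym/iter_first_return_rel.
have [j fjxa] := RVf x Rax.
exact: first_return_reaches (R_sym Rax) fjxa.
Qed.

End FirstReturn.

Lemma k_primal_open_Vmin (T : topologicalType) (k : nat) :
  k_primal T k -> forall a : T, open (Vmin a).
Proof. by move=> [fs primal] a; have [open_bigcap <-] := primal a. Qed.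

Lemma k_primal_Vmin_sub_Vf (T : topologicalType) (k : nat) : (0 < k)%N ->
  k_primal T k -> exists f : T -> T, forall a : T, Vmin a `<=` Vf f a.
Proof.
move=> k_gt0 [fs primal]; exists (fs (Ordinal k_gt0)) => a.
by have [_ <-] := primal a; move=> x /(_ (Ordinal k_gt0) I).
Qed.

Theorem mainTheorem7 (k : nat) (T : topologicalType) :
  (1 <= k)%N -> uniformizable T -> k_primal T k -> functional_alexandroff T.
Proof.
move=> k_gt0 [ent [ent_uniform open_ent]] primal.
have Vmin_sym := Vmin_sym ent_uniform open_ent.
have [f Vmin_sub_Vf] := k_primal_Vmin_sub_Vf k_gt0 primal.
apply: (@functional_alexandroff_Vmin _ (first_return Vmin f)).
  exact: k_primal_open_Vmin primal.
move=> a; apply: (Vf_first_return (@Vmin_refl T) Vmin_sym (@Vmin_trans T)).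
exact: Vmin_sub_Vf.
Qed.
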